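(* Let $S\subseteq\mathbb{R}^n$ be a closed set, $H$ an affine hyperplane, and $C\subseteq\mathbb{R}^n$ a convex $S$-free set. Assume $C=\{x\in\mathbb{R}^n : \alpha^\mathsf{T} x\le\beta\ \forall(\alpha,\beta)\in\Gamma\}$ for some family $\Gamma$ of inequalities, and that for every $(\alpha,\beta)\in\Gamma$ either there is a point $x\in S\cap C\cap H$ that exposes $(\alpha,\beta)$ with respect to $C$, or there is a sequence $(x_k)_k\subseteq S\cap H$ that exposes $(\alpha,\beta)$ at infinity with respect to $C$. Then $C$ is maximal $S$-free with respect to $H$.
   Context: A convex set $C$ is $S$-free if $\operatorname{int}(C)\cap S=\emptyset$. Given an affine hyperplane $H$, a closed convex $C$ is $S$-free with respect to $H$ if the interior of $C\cap H$ relative to $H$ does not meet $S\cap H$; it is maximal $S$-free with respect to $H$ if for every closed convex $C'\supseteq C$ that is $S$-free with respect to $H$, $C'\cap H\subseteq C\cap H$. An inequality $\alpha^\mathsf{T} x\le\beta$ (written $(\alpha,\beta)$) is valid for $C$ if it holds on $C$; it is non-trivial if $\alpha\neq0$. A point $x_0$ exposes a valid inequality $(\alpha,\beta)$ with respect to convex $C$ if $\alpha^\mathsf{T} x_0=\beta$ and for every non-trivial valid inequality $\gamma^\mathsf{T} x\le\delta$ for $C$ with $\gamma^\mathsf{T} x_0=\delta$ there is $\mu>0$ with $\gamma=\mu\alpha$ and $\delta=\mu\beta$. A sequence $(x_k)_k$ exposes a valid inequality $(\alpha,\beta)$ at infinity with respect to $C$ if: $\|x_k\|\to\infty$; $x_k/\|x_k\|\to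 d\in\operatorname{rec}(C)$ (the recession cone); $d$ exposes $\alpha^\mathsf{T} x\le0$ with respect to $\operatorname{rec}(C)$; and there exists $y$ with $\alpha^\mathsf{T} y=\beta$ such that $\operatorname{dist}(x_k,y+\langle d\rangle)\to0$, where $\langle d\rangle$ is the line spanned by $d$. *)

From HB Require Import structures.
From mathcomp Require Import all_boot all_order all_algebra.
From mathcomp Require Import all_classical all_reals all_analysis.
Set Implicit Arguments. Unset Strict Implicit. Unset Printing Implicit Defensive.
Import Order.TTheory GRing.Theory Num.Theory.
Import numFieldNormedType.Exports.
Local Open Scope classical_set_scope.
Local Open Scope ring_scope.

Section Defs.
Variables (R : realType) (n : nat).
Notation V := 'rV[R]_n.

Definition dot (u v : V) : R := \sum_(i < n) u ord0 i * v ord0 i.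
Definition enorm (u : V) : R := Num.sqrt (dot u u).

Definition edist (x : V) (A : set V) : R := inf [set enorm (x - z) | z in A].

Definition einterior (A : set V) : set V :=
  [set x | exists2 e : R, 0 < e & forall y, enorm (y - x) < e -> A y].
Definition eclosed (A : set V) : Prop :=
  forall x, ~ A x -> exists2 e : R, 0 < e & forall y, enorm (y - x) < e -> ~ A y.

Definition hyperplane (a : V) (b : R) : set V := [set x | dot a x = b].

Definition relinterior (H A : set V) : set V :=
  [set x | H x /\ A x /\ exists2 e : R, 0 < e &
             forall y, H y -> enorm (y - x) < e -> A y].

Definition is_convex (C : set V) : Prop :=
  forall x y (t : R), C x -> C y -> 0 <= t -> t <= 1 -> C (t *: x + (1 - t) *: y).

Definition S_free (S C : set V) : Prop := einterior C `&` S = set0.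

Definition S_free_wrt (S H C : set V) : Prop :=
  relinterior H (C `&` H) `&` (S `&` H) = set0.

Definition maximal_S_free_wrt (S H C : set V) : Prop :=
  forall C' : set V, eclosed C' -> is_convex C' -> C `<=` C' ->
    S_free_wrt S H C' -> C' `&` H `<=` C `&` H.

Definition valid (C : set V) (a : V) (b : R) : Prop := forall x, C x -> dot a x <= b.

Definition rec_cone (C : set V) : set V :=
  [set d | forall x, C x -> forall t : R, 0 <= t -> C (x + t *: d)].

Definition exposes (C : set V) (x0 : V) (a : V) (b : R) : Prop :=
  valid C a b /\ dot a x0 = b /\
  forall (g : V) (dl : R), g != 0 -> valid C g dl -> dot g x0 = dl ->
    exists2 mu : R, 0 < mu & g = mu *: a /\ dl = mu * b.

Definition aff_line (y d : V) : set V := [set y + t *: d | t in [set: R]].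

Definition exposes_at_infinity (C : set V) (xs : nat -> V) (a : V) (b : R) : Prop :=
  (fun k => enorm (xs k)) @ \oo --> +oo /\
  exists d : V,
    (fun k => enorm ((enorm (xs k))^-1 *: xs k - d)) @ \oo --> (0 : R) /\
    rec_cone C d /\
    exposes (rec_cone C) d a 0 /\
    exists y : V, dot a y = b /\
      (fun k => edist (xs k) (aff_line y d)) @ \oo --> (0 : R).

End Defs.

From Pilot Require Import Defs.
From HB Require Import structures.
From mathcomp Require Import all_boot all_order all_algebra.
From mathcomp Require Import all_classical all_reals all_analysis.
From mathcomp Require Import ring lra.
Import Order.TTheory GRing.Theory Num.Theory.
Import numFieldNormedType.Exports.
Set Implicit Arguments. Unset Strict Implicit. Unset Printing Implicit Defensive.
Local Open Scope classical_set_scope.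
Local Open Scope ring_scope.

(* Let C' ⊇ C be closed, convex and S-free relative to H, and suppose some z ∈ C' ∩ H
   lies outside C, so that z violates some (α, β) ∈ Γ.  At every point x that is not
   interior to C', C' has a supporting hyperplane g·c ≤ g·x with |g| = 1: a limit of
   hyperplanes separating C' from points p_k → x outside C'.
   If x ∈ C exposes (α, β), this hyperplane is valid for C and tight at x, hence a
   positive multiple of α·c ≤ β, which z violates; so x is interior to C'.
   If (x_k) exposes (α, β) at infinity, a limit g of supporting hyperplanes of C' at
   the x_k is nonpositive on rec(C) and, since x_k/|x_k| → d, vanishes at d; hence
   g = μα.  As x_k approaches the half-line y + ℝ₊d, along which g does not increase,
   g·z ≤ g·y, i.e. α·z ≤ α·y = β; so again some x_k is interior to C'.
   Either way a point of S ∩ H is interior to C', contradicting S-freeness. *)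

Section Euclid.
Variables (R : realType) (n : nat).
Local Notation V := 'rV[R]_n.
Implicit Types (u v w x y z c d g p q : V) (A C : set V).

Lemma dotC u v : dot u v = dot v u.
Proof. by apply: eq_bigr => i _; rewrite mulrC. Qed.

Lemma dotDl u v w : dot (u + v) w = dot u w + dot v w.
Proof. by rewrite /dot -big_split; apply: eq_bigr => i _; rewrite mxE mulrDl. Qed.

Lemma dotZl k u v : dot (k *: u) v = k * dot u v.
Proof. by rewrite /dot mulr_sumr; apply: eq_bigr => i _; rewrite mxE mulrA. Qed.

Lemma dotNl u v : dot (- u) v = - dot u v.
Proof. by rewrite -scaleN1r dotZl mulN1r. Qed.

Lemma dotBl u v w : dot (u - v) w = dot u w - dot v w.
Proof. by rewrite dotDl dotNl. Qed.

Lemma dotDr u v w : dot u (v + w) = dot u v + dot u w.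
Proof. by rewrite dotC dotDl !(dotC u). Qed.

Lemma dotZr k u v : dot u (k *: v) = k * dot u v.
Proof. by rewrite dotC dotZl dotC. Qed.

Lemma dotNr u v : dot u (- v) = - dot u v.
Proof. by rewrite dotC dotNl dotC. Qed.

Lemma dotBr u v w : dot u (v - w) = dot u v - dot u w.
Proof. by rewrite dotDr dotNr. Qed.

Lemma dot0l u : dot 0 u = 0.
Proof. by rewrite -(scale0r 0) dotZl mul0r. Qed.

Lemma dot0r u : dot u 0 = 0.
Proof. by rewrite dotC dot0l. Qed.

Lemma dot_ge0 u : 0 <= dot u u.
Proof. by apply: sumr_ge0 => i _; rewrite -expr2 sqr_ge0. Qed.

Lemma dot_eq0 u : dot u u = 0 -> u = 0.
Proof.
move=> /eqP; rewrite psumr_eq0 => [/allP u0|i _]; last by rewrite -expr2 sqr_ge0.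
apply/rowP => i; rewrite mxE.
by have := u0 i (mem_index_enum i); rewrite /= mulf_eq0 orbb => /eqP.
Qed.

Lemma dotBB u v : dot (u - v) (u - v) = dot u u - 2 * dot u v + dot v v.
Proof. by rewrite !(dotBl, dotBr) (dotC v u); ring. Qed.

Lemma enorm_ge0 u : 0 <= enorm u.
Proof. exact: sqrtr_ge0. Qed.

Lemma sqr_enorm u : enorm u ^+ 2 = dot u u.
Proof. by rewrite sqr_sqrtr // dot_ge0. Qed.

Lemma enorm_eq0 u : enorm u = 0 -> u = 0.
Proof. by move=> u0; apply: dot_eq0; rewrite -sqr_enorm u0 expr0n. Qed.

Lemma enorm0 : enorm (0 : V) = 0.
Proof. by rewrite /enorm dot0l sqrtr0. Qed.

Lemma enormN u : enorm (- u) = enorm u.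
Proof. by rewrite /enorm dotNl dotNr opprK. Qed.

Lemma enormZ k u : enorm (k *: u) = `|k| * enorm u.
Proof. by rewrite /enorm dotZl dotZr mulrA -expr2 sqrtrM ?sqr_ge0 // sqrtr_sqr. Qed.

Lemma cauchy_schwarz u v : dot u v <= enorm u * enorm v.
Proof.
have [/enorm_eq0 ->|u0] := eqVneq (enorm u) 0; first by rewrite dot0l enorm0 mul0r.
have [/enorm_eq0 ->|v0] := eqVneq (enorm v) 0; first by rewrite dot0r enorm0 mulr0.
have nu : 0 < enorm u by rewrite lt_neqAle eq_sym u0 enorm_ge0.
have nv : 0 < enorm v by rewrite lt_neqAle eq_sym v0 enorm_ge0.
have := dot_ge0 (enorm v *: u - enorm u *: v).
rewrite dotBB !(dotZl, dotZr) -!sqr_enorm.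
have : 0 < enorm u * enorm v by rewrite mulr_gt0.
nra.
Qed.

Lemma cauchy_schwarzN u v : - (enorm u * enorm v) <= dot u v.
Proof. by rewrite lerNl -dotNl -(enormN u) cauchy_schwarz. Qed.

Lemma enormD u v : enorm (u + v) <= enorm u + enorm v.
Proof.
rewrite -(ler_pXn2r (_ : 0 < 2)%N) ?nnegrE ?addr_ge0 ?enorm_ge0 //.
rewrite sqr_enorm !(dotDl, dotDr) sqrrD -!sqr_enorm (dotC v u).
have := cauchy_schwarz u v; lra.
Qed.

Lemma enormB u v : enorm (u - v) <= enorm u + enorm v.
Proof. by rewrite -(enormN v) enormD. Qed.

Lemma ler_dist_enorm u v : `|enorm u - enorm v| <= enorm (u - v).
Proof.
have := enormD (u - v) v; have := enormD (v - u) u.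
rewrite !subrK -opprB enormN ler_norml; lra.
Qed.

Lemma enorm_gt0 u : u != 0 -> 0 < enorm u.
Proof.
by move=> u0; rewrite lt_neqAle enorm_ge0 andbT eq_sym; apply: contra u0 => /eqP/enorm_eq0 ->.
Qed.

Lemma enorm_ge_coord u i : `|u ord0 i| <= enorm u.
Proof.
rewrite -sqrtr_sqr ler_sqrt ?dot_ge0 // /dot (bigD1 i) //= expr2 lerDl.
by apply: sumr_ge0 => j _; rewrite -expr2 sqr_ge0.
Qed.

Lemma enorm_le_coord u (m : R) : 0 <= m -> (forall i, `|u ord0 i| <= m) -> enorm u <= n%:R * m.
Proof.
move=> m0 um; have nm : 0 <= n%:R * m by rewrite mulr_ge0.
rewrite -(ger0_norm nm) -sqrtr_sqr ler_sqrt ?sqr_ge0 //.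
apply: (@le_trans _ _ (\sum_(i < n) m ^+ 2)).
  apply: ler_sum => i _; rewrite -expr2 -real_normK ?num_real //.
  by rewrite lerXn2r // ?nnegrE ?normr_ge0.
rewrite sumr_const card_ord exprMn -mulr_natl.
have : n%:R <= n%:R ^+ 2 :> R.
  by rewrite expr2 -natrM ler_nat; case: (n) => // k; rewrite leq_pmull.
have := sqr_ge0 m; nra.
Qed.

Lemma nbhs_enorm_lt g (e : R) : 0 < e -> nbhs g [set v | enorm (v - g) < e].
Proof.
move=> e0; have n1 : 0 < n%:R + 1 :> R by rewrite ltr_wpDl.
have e'0 : 0 < e / (n%:R + 1) by rewrite divr_gt0.
apply: filterS (nbhsx_ballx g _ e'0) => v [_ gv] /=.
have gve : forall i, `|(v - g) ord0 i| <= e / (n%:R + 1).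
  by move=> i; rewrite !mxE distrC; apply/ltW/gv.
apply: le_lt_trans (enorm_le_coord (ltW e'0) gve) _.
by rewrite mulrA ltr_pdivrMr // mulrC ltr_pM2l // ltrDl.
Qed.

Lemma enorm1_approx d : (forall e : R, 0 < e -> exists2 v, enorm v = 1 & enorm (v - d) < e) ->
  enorm d = 1.
Proof.
move=> d_approx; apply/eqP; rewrite -subr_eq0 -normr_le0; apply/ler_addgt0Pr => e e0.
have [v v1 vd] := d_approx e e0.
rewrite add0r -v1; apply: le_trans (ler_dist_enorm d v) _.
by rewrite -enormN opprB ltW.
Qed.

Lemma enorm_eq1_neq0 g : enorm g = 1 -> g != 0.
Proof. by apply: contra_eq_neq => ->; rewrite enorm0 eq_sym oner_neq0. Qed.

Lemma near_harmonic_lt (e : R) : 0 < e -> \forall k \near \oo, harmonic k < e.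
Proof.
move=> e0; apply: filterS (cvgr0_norm_lt _ cvg_harmonic _ e0) => k.
by rewrite ger0_norm // harmonic_ge0.
Qed.

Lemma bounded_seq_cluster (gs : nat -> V) (M : R) :
  (forall k, enorm (gs k) <= M) -> exists g, cluster (gs @ \oo) g.
Proof.
move=> gsM; pose box := [set v : V | forall i, `[-M, M]%classic (v ord0 i)].
have box_compact : compact box.
  by apply: (@rV_compact _ _ (fun=> `[-M, M]%classic)) => _; exact: segment_compact.
have gs_box : (gs @ \oo) box.
  exists 0%N => // k _ i /=; rewrite in_itv /= -ler_norml.
  exact: le_trans (enorm_ge_coord _ _) (gsM k).
by have [g [_ cg]] := box_compact _ _ gs_box; exists g.
Qed.

Section Cluster.
Variables (gs : nat -> V) (g : V).
Hypothesis gs_g : cluster (gs @ \oo) g.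

Lemma cluster_enorm_lt (P : set V) (e : R) : (\forall k \near \oo, P (gs k)) -> 0 < e ->
  exists2 v, P v & enorm (v - g) < e.
Proof.
move=> Pgs e0; have [v [Pv gv]] := gs_g Pgs (nbhs_enorm_lt g e0).
by exists v.
Qed.

Lemma cluster_dot_le0 u : (forall eta : R, 0 < eta -> \forall k \near \oo, dot (gs k) u <= eta) ->
  dot g u <= 0.
Proof.
move=> gsu; apply/ler_addgt0Pr => eta eta0; rewrite add0r.
have eta2 : 0 < eta / 2 by rewrite divr_gt0.
have u1 : 0 < enorm u + 1 by rewrite ltr_wpDl ?enorm_ge0.
have [v vu gv] :=
  cluster_enorm_lt (P := fun v => dot v u <= eta / 2) (gsu _ eta2) (divr_gt0 eta2 u1).
have : dot (g - v) u <= enorm (g - v) * enorm u by exact: cauchy_schwarz.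
rewrite dotBl -enormN opprB.
have : enorm (v - g) * enorm u <= eta / 2.
  rewrite ltr_pdivlMr // in gv; have := enorm_ge0 (v - g); nra.
lra.
Qed.

Lemma cluster_eclosed A : eclosed A -> (forall k, A (gs k)) -> A g.
Proof.
move=> Acl Ags; apply/not_notP => Ag.
have [e e0 eA] := Acl g Ag.
have [v Av gv] := cluster_enorm_lt (nearW _ Ags) e0.
exact: eA v gv Av.
Qed.

Lemma cluster_enorm1 : (forall k, enorm (gs k) = 1) -> enorm g = 1.
Proof.
move=> gs1; apply: enorm1_approx => e e0.
exact: (cluster_enorm_lt (P := fun v => enorm v = 1) (nearW _ gs1) e0).
Qed.

End Cluster.

Lemma eclosed_nearest A p c0 : eclosed A -> A c0 ->
  exists2 q, A q & forall c, A c -> enorm (p - q) <= enorm (p - c).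
Proof.
move=> Acl Ac0; pose E := [set enorm (p - c) | c in A].
have E_inf : has_inf E.
  split; first by exists (enorm (p - c0)), c0.
  by exists 0 => _ [c _ <-]; exact: enorm_ge0.
have near_inf k : exists c, A c /\ enorm (p - c) < inf E + harmonic k.
  by have [_ [c Ac <-] pc] := inf_adherent (harmonic_gt0 k) E_inf; exists c.
have [cs cs_min] := choice near_inf.
have cs_bounded k : enorm (cs k) <= enorm p + (inf E + 1).
  have [_ pc] := cs_min k; have := enormB p (p - cs k); rewrite opprB addrC subrK.
  have : harmonic k <= 1 :> R by rewrite /= invf_le1 ?ltr0Sn // ler1n.
  lra.
have [q cs_q] := bounded_seq_cluster cs_bounded.
exists q; first exact: (cluster_eclosed cs_q Acl (fun k => (cs_min k).1)).
move=> c Ac; apply/ler_addgt0Pr => eta eta0; have eta2 : 0 < eta / 2 by rewrite divr_gt0.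
have infc : inf E <= enorm (p - c) by apply: (ge_inf E_inf.2); exists c.
have cs_near : \forall k \near \oo, enorm (p - cs k) < inf E + eta / 2.
  by apply: filterS (near_harmonic_lt eta2) => k; have [_] := cs_min k; lra.
have [v pv vq] :=
  cluster_enorm_lt cs_q (P := fun v => enorm (p - v) < inf E + eta / 2) cs_near eta2.
have := enormD (p - v) (v - q); rewrite addrA subrK; lra.
Qed.

Lemma nearest_obtuse A p q : is_convex A -> A q ->
  (forall c, A c -> enorm (p - q) <= enorm (p - c)) ->
  forall c, A c -> dot (p - q) (c - q) <= 0.
Proof.
move=> Acv Aq qmin c Ac; set w := p - q; set h := c - q.
have small_steps (t : R) : 0 < t -> t <= 1 -> 2 * dot w h <= t * dot h h.
  move=> t0 t1; have := qmin _ (Acv c q t Ac Aq (ltW t0) t1).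
  have -> : p - (t *: c + (1 - t) *: q) = w - t *: h.
    by apply/rowP => i; rewrite !mxE; ring.
  rewrite -(ler_pXn2r (_ : 0 < 2)%N) ?nnegrE ?enorm_ge0 // !sqr_enorm.
  rewrite (dotBB w (t *: h)) dotZl !dotZr; nra.
rewrite leNgt; apply/negP => wh_gt0.
have hh_ge0 := dot_ge0 h.
have sum_gt0 : 0 < dot w h + dot h h by rewrite ltr_wpDr.
have := small_steps (dot w h / (dot w h + dot h h)) (divr_gt0 wh_gt0 sum_gt0).
rewrite ler_pdivrMr // mul1r lerDl hh_ge0 mulrAC ler_pdivlMr // => /(_ isT).
nra.
Qed.

Lemma separate_point A p c0 : eclosed A -> is_convex A -> A c0 -> ~ A p ->
  exists g, enorm g = 1 /\ forall c, A c -> dot g c <= dot g p.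
Proof.
move=> Acl Acv Ac0 Ap; have [q Aq qmin] := eclosed_nearest p Acl Ac0.
have pq : p - q != 0 by rewrite subr_eq0; apply: contraPneq Ap => ->.
exists ((enorm (p - q))^-1 *: (p - q)); split.
  by rewrite enormZ ger0_norm ?invr_ge0 ?enorm_ge0 // mulVf // gt_eqF // enorm_gt0.
move=> c Ac; rewrite !dotZl ler_wpM2l ?invr_ge0 ?enorm_ge0 //.
have := nearest_obtuse Acv Aq qmin Ac; have := dot_ge0 (p - q).
rewrite !dotBr; lra.
Qed.

Lemma supporting_hyperplane A x c0 : eclosed A -> is_convex A -> A c0 -> ~ einterior A x ->
  exists g, enorm g = 1 /\ forall c, A c -> dot g c <= dot g x.
Proof.
move=> Acl Acv Ac0 xA.
have near_out k : exists p, enorm (p - x) < harmonic k /\ ~ A p.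
  apply: contrapT => no_out; apply: xA; exists (harmonic k); first exact: harmonic_gt0.
  by move=> y yx; apply: contrapT => Ay; apply: no_out; exists y.
have [ps ps_out] := choice near_out.
have [gs gs_sep] := choice (fun k => separate_point Acl Acv Ac0 (ps_out k).2).
have gs_le1 k : enorm (gs k) <= 1 by rewrite (gs_sep k).1.
have [g gs_g] := bounded_seq_cluster gs_le1.
exists g; split; first exact: cluster_enorm1 gs_g (fun k => (gs_sep k).1).
move=> c Ac; rewrite -subr_le0 -dotBr; apply: (cluster_dot_le0 gs_g) => eta eta0.
apply: filterS (near_harmonic_lt eta0) => k.
have [gk1 gk_sep] := gs_sep k; have := gk_sep c Ac.
have := cauchy_schwarz (gs k) (ps k - x); have := (ps_out k).1.
rewrite gk1 mul1r !dotBr; lra.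
Qed.

Lemma exposed_einterior C A x a b z : C `<=` A -> eclosed A -> is_convex A ->
  C x -> exposes C x a b -> A z -> b < dot a z -> einterior A x.
Proof.
move=> CA Acl Acv Cx [_ [_ x_exposes]] Az bz; apply: contrapT => xA.
have [g [g1 g_supp]] := supporting_hyperplane Acl Acv (CA x Cx) xA.
have [mu mu0 [gE gxE]] :=
  x_exposes g (dot g x) (enorm_eq1_neq0 g1) (fun c Cc => g_supp c (CA c Cc)) erefl.
by have := g_supp z Az; rewrite gxE gE dotZl ler_pM2l // leNgt bz.
Qed.

Lemma rec_cone_dot_le0 C g (m : R) c0 v : C c0 -> (forall c, C c -> dot g c <= m) ->
  rec_cone C v -> dot g v <= 0.
Proof.
move=> Cc0 gm Cv; rewrite leNgt; apply/negP => gv.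
pose s := (`|m - dot g c0| + 1) / dot g v.
have s_ge0 : 0 <= s by rewrite /s divr_ge0 ?(ltW gv) // addr_ge0.
have := gm _ (Cv c0 Cc0 s s_ge0); rewrite dotDr dotZr /s divfK ?gt_eqF //.
have := ler_norm (m - dot g c0); lra.
Qed.

Lemma S_free_wrt_einterior S H A x : S_free_wrt S H A -> S x -> H x -> ~ einterior A x.
Proof.
move=> A_free Sx Hx [e e0 eA].
suff : (relinterior H (A `&` H) `&` (S `&` H)) x by rewrite A_free.
split=> //; split=> //; split; first by split=> //; apply: eA; rewrite subrr enorm0.
by exists e => // y Hy ye; split=> //; apply: eA.
Qed.

Lemma dot_normalized h x d : 0 < enorm x ->
  dot h x = enorm x * (dot h d + dot h ((enorm x)^-1 *: x - d)).
Proof. by move=> x0; rewrite -dotDr addrCA subrr addr0 dotZr mulrA divff ?mul1r ?gt_eqF. Qed.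

Lemma line_proj_le d u (t : R) : enorm d = 1 -> enorm (u - dot d u *: d) <= enorm (u - t *: d).
Proof.
move=> d1; rewrite -(ler_pXn2r (_ : 0 < 2)%N) ?nnegrE ?enorm_ge0 // !sqr_enorm !dotBB.
have dd : dot d d = 1 by rewrite -sqr_enorm d1 expr1n.
rewrite !(dotZl, dotZr) dd (dotC u d); have := sqr_ge0 (t - dot d u); nra.
Qed.

Lemma line_proj_le_edist x y d : enorm d = 1 ->
  enorm (x - (y + dot d (x - y) *: d)) <= Defs.edist x (aff_line y d).
Proof.
move=> d1; apply: lb_le_inf.
  by exists (enorm (x - y)), y => //; exists 0 => //; rewrite scale0r addr0.
move=> _ [_ [t _ <-] <-]; rewrite !opprD !addrA.
exact: line_proj_le.
Qed.

Section ExposingSequence.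
Variables (xs : nat -> V) (d y : V).
Hypothesis xs_oo : (fun k => enorm (xs k)) @ \oo --> +oo.
Hypothesis xs_dir : (fun k => enorm ((enorm (xs k))^-1 *: xs k - d)) @ \oo --> (0 : R).
Hypothesis xs_line : (fun k => Defs.edist (xs k) (aff_line y d)) @ \oo --> (0 : R).

Lemma near_enorm_ge (M : R) : \forall k \near \oo, M <= enorm (xs k).
Proof. exact: (cvgryPge _).1 xs_oo M. Qed.

Lemma near_dir (e : R) : 0 < e -> \forall k \near \oo,
  0 < enorm (xs k) /\ enorm ((enorm (xs k))^-1 *: xs k - d) < e.
Proof.
move=> e0; apply: filterS2 (near_enorm_ge 1) (cvgr0_norm_lt _ xs_dir _ e0) => k xs1.
by rewrite ger0_norm ?enorm_ge0 // => dk; split=> //; apply: lt_le_trans xs1.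
Qed.

Lemma dir_enorm1 : enorm d = 1.
Proof.
apply: enorm1_approx => e e0; have [k [xs0 dk]] := filter_ex (near_dir e0).
exists ((enorm (xs k))^-1 *: xs k) => //.
by rewrite enormZ ger0_norm ?invr_ge0 ?enorm_ge0 // mulVf ?gt_eqF.
Qed.

Lemma near_halfline (e : R) : 0 < e ->
  \forall k \near \oo, exists2 t : R, 0 <= t & enorm (xs k - (y + t *: d)) < e.
Proof.
move=> e0; have d1 := dir_enorm1; have half : 0 < 1 / 2 :> R by [].
apply: filterS3 (near_dir half) (near_enorm_ge (2 * enorm y)) (cvgr0_norm_lt _ xs_line _ e0).
move=> k [xs0 dk] xsy lk; exists (dot d (xs k - y)).
  rewrite dotBr subr_ge0 (dot_normalized d d xs0) -sqr_enorm d1.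
  have := cauchy_schwarz d y; have := cauchy_schwarzN d ((enorm (xs k))^-1 *: xs k - d).
  rewrite d1 !mul1r; nra.
exact: le_lt_trans (line_proj_le_edist _ _ d1) (le_lt_trans (ler_norm _) lk).
Qed.

Variables (A : set V) (gs : nat -> V).
Hypothesis gs1 : forall k, enorm (gs k) = 1.
Hypothesis gs_supp : forall k c, A c -> dot (gs k) c <= dot (gs k) (xs k).

Lemma near_support_dir c0 : A c0 ->
  forall eta : R, 0 < eta -> \forall k \near \oo, dot (gs k) (- d) <= eta.
Proof.
move=> Ac0 eta eta0; have eta2 : 0 < eta / 2 by rewrite divr_gt0.
apply: filterS2 (near_dir eta2) (near_enorm_ge (enorm c0 / (eta / 2))) => k [xs0 dk].
rewrite ler_pdivrMr // dotNr => c0_le.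
have := gs_supp k Ac0; rewrite (dot_normalized _ d xs0).
have := cauchy_schwarzN (gs k) c0; have := cauchy_schwarz (gs k) ((enorm (xs k))^-1 *: xs k - d).
rewrite gs1 !mul1r; nra.
Qed.

Lemma near_support_halfline z : A z -> (forall k, dot (gs k) d <= 0) ->
  forall eta : R, 0 < eta -> \forall k \near \oo, dot (gs k) (z - y) <= eta.
Proof.
move=> Az gs_d eta eta0; apply: filterS (near_halfline eta0) => k [t t0 xk].
have := gs_supp k Az; have := cauchy_schwarz (gs k) (xs k - (y + t *: d)).
have : t * dot (gs k) d <= 0 by rewrite mulr_ge0_le0.
rewrite gs1 mul1r !dotBr dotDr dotZr; lra.
Qed.

End ExposingSequence.

Lemma exposing_sequence_einterior C A xs a b z : C `<=` A -> eclosed A -> is_convex A ->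
  A z -> b < dot a z -> exposes_at_infinity C xs a b -> exists k, einterior A (xs k).
Proof.
move=> CA Acl Acv Az bz [xs_oo [d [xs_dir [Cd [[a_rec [_ d_exposes]] [y [ay xs_line]]]]]]].
have [c0 Cc0] : C !=set0.
  apply: contrapT => C0; have a0 : a = 0.
    by apply/dot_eq0/eqP; rewrite eq_le dot_ge0 andbT a_rec // => c Cc; case: C0; exists c.
  by move: bz; rewrite -ay a0 !dot0l ltxx.
apply: contrapT => no_int.
have supp k : exists g, enorm g = 1 /\ forall c, A c -> dot g c <= dot g (xs k).
  by apply: supporting_hyperplane Acl Acv (CA c0 Cc0) _ => kA; apply: no_int; exists k.
have [gs gs_props] := choice supp.
have gs1 k : enorm (gs k) = 1 := (gs_props k).1.
have gs_supp k : forall c, A c -> dot (gs k) c <= dot (gs k) (xs k) := (gs_props k).2.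
have gs_le1 k : enorm (gs k) <= 1 by rewrite gs1.
have [g gs_g] := bounded_seq_cluster gs_le1.
have gs_rec k v : rec_cone C v -> dot (gs k) v <= 0.
  by apply: rec_cone_dot_le0 Cc0 _ => c Cc; exact: gs_supp (CA c Cc).
have g_rec : valid (rec_cone C) g 0.
  move=> v Cv; apply: (cluster_dot_le0 gs_g) => eta eta0.
  by apply: nearW => k; apply: le_trans (gs_rec k v Cv) (ltW eta0).
have gd : dot g d = 0.
  apply/eqP; rewrite eq_le g_rec //= -oppr_le0 -dotNr.
  exact: (cluster_dot_le0 gs_g (near_support_dir xs_oo xs_dir gs1 gs_supp (CA c0 Cc0))).
have [mu mu0 [ga _]] := d_exposes g 0 (enorm_eq1_neq0 (cluster_enorm1 gs_g gs1)) g_rec gd.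
have := cluster_dot_le0 gs_g
  (near_support_halfline xs_oo xs_dir xs_line gs1 gs_supp Az (fun k => gs_rec k d Cd)).
by rewrite ga dotZl dotBr ay pmulr_rle0 // subr_le0 leNgt bz.
Qed.

End Euclid.

Theorem theorem5 (R : realType) (n : nat) (S : set 'rV[R]_n)
    (a : 'rV[R]_n) (b : R) (C : set 'rV[R]_n) (Gamma : set ('rV[R]_n * R)) :
  eclosed S ->
  a != 0 ->
  is_convex C ->
  S_free S C ->
  C = [set x | forall p, Gamma p -> dot p.1 x <= p.2] ->
  (forall p, Gamma p ->
     (exists2 x, (S `&` C `&` hyperplane a b) x & exposes C x p.1 p.2) \/
     (exists2 xs : nat -> 'rV[R]_n, (forall k, (S `&` hyperplane a b) (xs k)) &
        exposes_at_infinity C xs p.1 p.2)) ->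
  maximal_S_free_wrt S (hyperplane a b) C.
Proof.
move=> _ _ _ _ C_Gamma Gamma_exposed A Acl Acv CA A_free z [Az Hz].
split=> //; apply: contrapT => Cz.
have [p Gp pz] : exists2 p, Gamma p & p.2 < dot p.1 z.
  apply: contrapT => no_p; apply: Cz; rewrite C_Gamma => p Gp.
  by rewrite leNgt; apply/negP => pz; apply: no_p; exists p.
have [[x [[Sx Cx] Hx] x_exp] | [xs xs_SH xs_exp]] := Gamma_exposed p Gp.
  exact: S_free_wrt_einterior A_free Sx Hx (exposed_einterior CA Acl Acv Cx x_exp Az pz).
have [k k_int] := exposing_sequence_einterior CA Acl Acv Az pz xs_exp.
have [Sk Hk] := xs_SH k.
exact: S_free_wrt_einterior A_free Sk Hk k_int.
Qed.
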